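(* Let $\{a_j\}_{j=-\infty}^{\infty}\in\ell^2$ and $m\in\mathbb{Z}$, $m\neq 0$. Suppose that for each $j$ there is a constant $C_j$ such that $|a_{j+m}|\leq C_j|a_j|$. If, in addition, there is a $J$ such that $|a_{j+m}|\leq|a_j|$ whenever $|j|\geq J$, then $a_j=0$ for all $j$. *)

From Stdlib Require Import Reals ZArith.
From Coquelicot Require Import Coquelicot.
Open Scope R_scope.

Definition in_l2 (a : Z -> C) : Prop :=
  ex_series (fun n : nat => (Cmod (a (Z.of_nat n)))^2) /\
  ex_series (fun n : nat => (Cmod (a (- Z.of_nat n)%Z))^2).

(** For [|i| >= J] the hypothesis reads [|a (i + m)| <= |a i|], so along the
    progression [j0, j0 - m, j0 - 2m, ...], which stays in that region when
    [j0 = j - K m] with [K] large, [|a|] never drops below [|a j0|].  Square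
    summability forces [|a i| -> 0] as [|i| -> oo], hence [a j0 = 0], and the
    bounds [|a (i + m)| <= C_i |a i|] carry this zero forward [K] steps to [j]. *)
From Stdlib Require Import Reals ZArith.
From Coquelicot Require Import Coquelicot.
From Stdlib Require Import Lra Lia Psatz.
Open Scope R_scope.

Lemma Zabs_sub_mul_ge (j k m : Z) :
  m <> 0%Z -> (0 <= k)%Z -> (k - Z.abs j <= Z.abs (j - k * m))%Z.
Proof.
  intros m_neq0 k_ge0.
  assert (abs_km : (Z.abs (k * m) = k * Z.abs m)%Z) by (rewrite Z.abs_mul; lia).
  assert (k_le_km : (k <= k * Z.abs m)%Z) by nia.
  assert (tri : (Z.abs (k * m) <= Z.abs (j - k * m) + Z.abs j)%Z) by lia.
  lia.
Qed.

Lemma in_l2_Cmod_small_at_infinity (a : Z -> C) (eps : R) :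
  in_l2 a -> 0 < eps ->
  exists N : Z, forall z : Z, (N <= Z.abs z)%Z -> Cmod (a z) < eps.
Proof.
  intros [pos_series neg_series] eps_gt0.
  assert (eps2_gt0 : 0 < eps ^ 2) by (apply pow_lt; exact eps_gt0).
  apply ex_series_lim_0, is_lim_seq_spec in pos_series.
  apply ex_series_lim_0, is_lim_seq_spec in neg_series.
  destruct (pos_series (mkposreal _ eps2_gt0)) as [N1 HN1].
  destruct (neg_series (mkposreal _ eps2_gt0)) as [N2 HN2].
  exists (Z.of_nat (Nat.max N1 N2)). intros z Hz.
  assert (sqr_small : Cmod (a z) ^ 2 < eps ^ 2).
  { destruct (Z_le_gt_dec 0 z) as [z_ge0 | z_lt0].
    - specialize (HN1 (Z.to_nat z) ltac:(lia)).
      rewrite Z2Nat.id, Rminus_0_r in HN1 by lia.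
      exact (Rle_lt_trans _ _ _ (Rle_abs _) HN1).
    - specialize (HN2 (Z.to_nat (- z)) ltac:(lia)).
      rewrite Z2Nat.id, Z.opp_involutive, Rminus_0_r in HN2 by lia.
      exact (Rle_lt_trans _ _ _ (Rle_abs _) HN2). }
  pose proof (Cmod_ge_0 (a z)). nra.
Qed.

Section ArithmeticOrbit.

Variables (a : Z -> C) (m : Z).

Lemma Cmod_backward_orbit_ge (J j0 : Z) :
  (forall j : Z, (J <= Z.abs j)%Z -> Cmod (a (j + m)%Z) <= Cmod (a j)) ->
  (forall k : nat, (J <= Z.abs (j0 - Z.of_nat k * m))%Z) ->
  forall k : nat, Cmod (a j0) <= Cmod (a (j0 - Z.of_nat k * m)%Z).
Proof.
  intros dominated far k.
  induction k as [|k IH].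
  - replace (j0 - Z.of_nat 0 * m)%Z with j0 by lia. apply Rle_refl.
  - apply (Rle_trans _ _ _ IH).
    replace (j0 - Z.of_nat k * m)%Z with (j0 - Z.of_nat (S k) * m + m)%Z by lia.
    apply dominated, far.
Qed.

Lemma in_l2_backward_orbit_ge_eq0 (j0 : Z) :
  in_l2 a -> m <> 0%Z ->
  (forall k : nat, Cmod (a j0) <= Cmod (a (j0 - Z.of_nat k * m)%Z)) ->
  a j0 = 0%C.
Proof.
  intros l2 m_neq0 orbit_ge.
  apply Cmod_eq_0.
  destruct (Rle_lt_or_eq_dec _ _ (Cmod_ge_0 (a j0))) as [pos | zero];
    [| symmetry; exact zero].
  destruct (in_l2_Cmod_small_at_infinity a _ l2 pos) as [N small].
  set (k := Z.to_nat (Z.abs N + Z.abs j0)).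
  assert (far : (N <= Z.abs (j0 - Z.of_nat k * m))%Z).
  { pose proof (Zabs_sub_mul_ge j0 (Z.of_nat k) m m_neq0 ltac:(lia)).
    unfold k in *. rewrite Z2Nat.id in * by lia. lia. }
  specialize (small _ far). specialize (orbit_ge k). lra.
Qed.

Lemma forward_orbit_eq0 (j0 : Z) :
  (forall j : Z, exists Cj : R, Cmod (a (j + m)%Z) <= Cj * Cmod (a j)) ->
  a j0 = 0%C -> forall k : nat, a (j0 + Z.of_nat k * m)%Z = 0%C.
Proof.
  intros bounded a_j0 k.
  induction k as [|k IH].
  - replace (j0 + Z.of_nat 0 * m)%Z with j0 by lia. exact a_j0.
  - apply Cmod_eq_0.
    destruct (bounded (j0 + Z.of_nat k * m)%Z) as [Cj HCj].
    rewrite IH, Cmod_0, Rmult_0_r in HCj.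
    replace (j0 + Z.of_nat (S k) * m)%Z with (j0 + Z.of_nat k * m + m)%Z by lia.
    pose proof (Cmod_ge_0 (a (j0 + Z.of_nat k * m + m)%Z)). lra.
Qed.

End ArithmeticOrbit.

Theorem mainTheorem6 (a : Z -> C) (m : Z) :
  in_l2 a ->
  m <> 0%Z ->
  (forall j : Z, exists Cj : R, Cmod (a (j + m)%Z) <= Cj * Cmod (a j)) ->
  (exists J : Z, forall j : Z, (J <= Z.abs j)%Z -> Cmod (a (j + m)%Z) <= Cmod (a j)) ->
  forall j : Z, a j = 0%C.
Proof.
  intros l2 m_neq0 bounded [J dominated] j.
  set (K := (Z.abs J + Z.abs j)%Z).
  set (j0 := (j - K * m)%Z).
  assert (far : forall k : nat, (J <= Z.abs (j0 - Z.of_nat k * m))%Z).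
  { intro k.
    pose proof (Zabs_sub_mul_ge j (K + Z.of_nat k) m m_neq0 ltac:(lia)).
    replace (j0 - Z.of_nat k * m)%Z with (j - (K + Z.of_nat k) * m)%Z by (unfold j0; ring).
    lia. }
  assert (a_j0 : a j0 = 0%C).
  { apply (in_l2_backward_orbit_ge_eq0 a m); [exact l2 | exact m_neq0 |].
    exact (Cmod_backward_orbit_ge a m J j0 dominated far). }
  pose proof (forward_orbit_eq0 a m j0 bounded a_j0 (Z.to_nat K)) as a_j.
  rewrite Z2Nat.id in a_j by lia.
  replace (j0 + K * m)%Z with j in a_j by (unfold j0; ring).
  exact a_j.
Qed.
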